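(* Let $D$ be a Newton diagram in $2$ variables whose support is exactly $K=\{(a,b)\in\mathbb N_0^2: a+b<d\}$ for some integer $d\ge1$. Then $\#(D)\ge\frac{d+5}{2}$.
   Context: For $m\in\mathbb Z^n$ write $|m|=m_1+\dots+m_n$; $e_1,\dots,e_n$ is the standard basis. A Newton diagram in $n$ variables is a function $D\colon\mathbb Z^n\to\{0,P,N\}$ ($P,N$ formal symbols) whose support $K=D^{-1}(\{P,N\})$ is a finite nonempty subset of $\mathbb N_0^n$. For $a\in\mathbb Z^n$ let $E(a)=\{a,a-e_1,\dots,a-e_n\}$; $E(a)$ is a node of $D$ if the image $D(E(a))$ equals $\{P\}$, $\{N\}$, $\{0,P\}$ or $\{0,N\}$. $\#(D)$ is the number of $a\in\mathbb Z^n$ for which $E(a)$ is a node. *)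

From HB Require Import structures.
From mathcomp Require Import all_boot all_order all_algebra.
Set Implicit Arguments. Unset Strict Implicit. Unset Printing Implicit Defensive.
Import Order.TTheory GRing.Theory Num.Theory.

(* The values of a Newton diagram: 0, P, N. *)
Inductive sign := S0 | SP | SN.

Definition sign_to_ord (s : sign) : 'I_3 :=
  match s with S0 => inord 0 | SP => inord 1 | SN => inord 2 end.
Definition ord_to_sign (i : 'I_3) : sign :=
  match val i with 0 => S0 | 1 => SP | _ => SN end.
Lemma sign_to_ordK : cancel sign_to_ord ord_to_sign.
Proof. by case; rewrite /ord_to_sign /= inordK. Qed.
HB.instance Definition _ := Finite.copy sign (can_type sign_to_ordK).

Definition pt := (int * int)%type.

Definition support2 (D : pt -> sign) (x : pt) : Prop := D x <> S0.

Definition triangle (d : nat) (x : pt) : Prop :=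
  (0 <= x.1)%R /\ (0 <= x.2)%R /\ (x.1 + x.2 < d%:Z)%R.

Definition imageE (D : pt -> sign) (a : pt) : {set sign} :=
  [set D a; D (a.1 - 1, a.2)%R; D (a.1, a.2 - 1)%R].

Definition is_node (D : pt -> sign) (a : pt) : bool :=
  imageE D a \in [:: [set SP]; [set SN]; [set S0; SP]; [set S0; SN]].

(* n = #(D): s is a duplicate-free enumeration of the nodes of D. *)
Definition enumerates_nodes (D : pt -> sign) (s : seq pt) : Prop :=
  uniq s /\ forall a : pt, is_node D a <-> a \in s.

(* Double counting over the box [0,d]^2.  At a point a let z be the number of
   nonzero values among D a, D (a - e1), D (a - e2), and j the number of pairs
   among them with opposite nonzero signs; the 27 sign patterns give
   z + 2 [z = 1] <= 1 + j + 2 [E(a) is a node].  Summed over the box: each of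
   the three translates of D is nonzero at |K_d| points, z = 1 at the corners
   (0,0), (d,0), (0,d), the constant 1 is only needed on K_{d+1}, and the pairs
   counted by j are edges of the unit triangles {a, a + e1, a + e2}, a in
   K_{d-1}, each carrying at most two of them.  Hence
   3 |K_d| + 6 <= |K_{d+1}| + 2 |K_{d-1}| + 2 #(D), that is d + 5 <= 2 #(D). *)

From HB Require Import structures.
From mathcomp Require Import all_boot all_order all_algebra.
From mathcomp Require Import zify.

Definition sign_eqb (x y : sign) : bool :=
  match x, y with S0, S0 | SP, SP | SN, SN => true | _, _ => false end.

Lemma eq_signE (x y : sign) : (x == y) = sign_eqb x y.
Proof. by apply/eqP/idP => [->|]; [case: y | case: x; case: y]. Qed.

Lemma eq_sign_set (A B : {set sign}) :
  (A == B) = [&& (S0 \in A) == (S0 \in B), (SP \in A) == (SP \in B)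
               & (SN \in A) == (SN \in B)].
Proof.
apply/eqP/and3P => [-> | [/eqP h0 /eqP hP /eqP hN]]; first by rewrite !eqxx.
by apply/setP => -[].
Qed.

Lemma node_setE (A : {set sign}) : A != set0 ->
  (A \in [:: [set SP]; [set SN]; [set S0; SP]; [set S0; SN]])
    = ((SP \in A) != (SN \in A)).
Proof.
rewrite !inE !eq_sign_set !inE !eq_signE /=.
by case: (S0 \in A); case: (SP \in A); case: (SN \in A).
Qed.

Definition nz (x : sign) : nat := x != S0.

Lemma nz0 : nz S0 = 0. Proof. by rewrite /nz eq_signE. Qed.

Definition nz3 (x y z : sign) : nat := nz x + nz y + nz z.

Definition jump (x y : sign) : nat := [&& x != S0, y != S0 & x != y].

Definition jump3 (x y z : sign) : nat := jump x y + jump x z + jump y z.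

Definition node3 (x y z : sign) : bool :=
  (SP \in [set x; y; z]) != (SN \in [set x; y; z]).

Lemma is_nodeE (D : pt -> sign) (a : pt) :
  is_node D a = node3 (D a) (D (a.1 - 1, a.2)%R) (D (a.1, a.2 - 1)%R).
Proof.
rewrite /is_node node_setE //.
by apply/set0Pn; exists (D a); rewrite !inE eqxx.
Qed.

Lemma jumpC x y : jump x y = jump y x.
Proof. by case: x; case: y; rewrite /jump !eq_signE. Qed.

Lemma jump0s x : jump S0 x = 0. Proof. by rewrite /jump eq_signE. Qed.
Lemma jumps0 x : jump x S0 = 0. Proof. by rewrite jumpC jump0s. Qed.

Lemma jump3_le2 x y z : jump3 x y z <= 2.
Proof. by case: x; case: y; case: z; rewrite /jump3 /jump !eq_signE. Qed.

Lemma nz3_le x y z : nz3 x y z + 2 * (nz3 x y z == 1) <= 1 + jump3 x y z + 2 * node3 x y z.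
Proof. by case: x; case: y; case: z; rewrite /nz3 /nz /jump3 /jump /node3 !inE !eq_signE. Qed.

Lemma big_nat_shift n (F : nat -> nat) : F 0 = 0 -> F n.+1 = 0 ->
  \sum_(0 <= i < n.+1) F i = \sum_(0 <= i < n.+1) F i.+1.
Proof.
by move=> F0 Fn; rewrite big_nat_recl // big_nat_recr //= F0 Fn addn0 add0n.
Qed.

Definition box_sum n (F : nat -> nat -> nat) :=
  \sum_(0 <= i < n) \sum_(0 <= j < n) F i j.

Lemma box_sumD n F G :
  box_sum n (fun i j => F i j + G i j) = box_sum n F + box_sum n G.
Proof. by rewrite /box_sum -big_split; apply: eq_bigr => i _; rewrite big_split. Qed.

Lemma box_sumMn n k F : box_sum n (fun i j => k * F i j) = k * box_sum n F.
Proof. by rewrite /box_sum big_distrr; apply: eq_bigr => i _; rewrite big_distrr. Qed.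

Lemma leq_box_sum n F G : (forall i j, F i j <= G i j) -> box_sum n F <= box_sum n G.
Proof. by move=> FG; apply: leq_sum => i _; apply: leq_sum => j _. Qed.

Lemma box_sum_delta n a b :
  box_sum n (fun i j => (i == a) * (j == b)) = (a < n) * (b < n).
Proof.
have sum_eq c : \sum_(0 <= i < n) (i == c : nat) = (c < n).
  elim: n => [|n IH]; first by rewrite big_geq.
  rewrite big_nat_recr //= IH [c < n.+1]ltnS [c <= n]leq_eqVlt eq_sym.
  by case: (ltngtP c n).
by rewrite /box_sum -!sum_eq big_distrlr.
Qed.

Lemma box_sum_shift1 n F : (forall j, F 0 j = 0) -> (forall j, F n.+1 j = 0) ->
  box_sum n.+1 F = box_sum n.+1 (fun i j => F i.+1 j).
Proof. by move=> F0 Fn; rewrite /box_sum big_nat_shift // big1. Qed.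

Lemma box_sum_shift2 n F : (forall i, F i 0 = 0) -> (forall i, F i n.+1 = 0) ->
  box_sum n.+1 F = box_sum n.+1 (fun i j => F i j.+1).
Proof. by move=> F0 Fn; apply: eq_bigr => i _; rewrite big_nat_shift. Qed.

Lemma box_sum_ltS n m : m <= n ->
  box_sum n.+1 (fun i j => i + j < m.+1) = box_sum n.+1 (fun i j => i + j < m) + m.+1.
Proof.
move=> mn; rewrite /box_sum big_nat_recl // [in RHS]big_nat_recr //= addnC.
rewrite [X in _ = _ + X + _]big1 => [|j _]; last by rewrite ltnNge (leq_trans mn) ?leq_addr.
rewrite addn0; congr (_ + _).
rewrite (@big_cat_nat _ _ _ m.+1) //= [X in _ + X]big_nat_cond.
rewrite [X in _ + X]big1 => [|j /andP [/andP [mj _] _]]; last by rewrite ltnNge mj.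
rewrite addn0 (@eq_big_nat _ _ _ _ _ _ (fun _ => 1)) => [|j /andP [_ ->] //].
by rewrite sum_nat_const_nat muln1 subn0.
Qed.

Lemma box_sum_nodes n {D : pt -> sign} {s : seq pt} : enumerates_nodes D s ->
  box_sum n (fun i j => is_node D (Posz i, Posz j)) <= size s.
Proof.
move=> [s_uniq s_nodes]; pose toZ (p : nat * nat) : pt := (Posz p.1, Posz p.2).
have toZ_inj : injective toZ by move=> [a b] [a' b'] [-> ->].
rewrite /box_sum -(big_allpairs (F := fun p => (is_node D (toZ p) : nat))).
rewrite (eq_bigr (fun p => if is_node D (toZ p) then 1 else 0)) => [|p _]; last by case: ifP.
rewrite -big_mkcond sum1_count -size_filter -(size_map toZ); apply: uniq_leq_size.
  by rewrite map_inj_uniq // filter_uniq // allpairs_uniq ?iota_uniq // => -[? ?] [? ?] _ _.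
by move=> x /mapP [p]; rewrite mem_filter => /andP [p_node _] ->; apply/s_nodes.
Qed.

Definition shift1 (f : nat -> nat -> sign) i j := if i is i'.+1 then f i' j else S0.
Definition shift2 (f : nat -> nat -> sign) i j := if j is j'.+1 then f i j' else S0.

Section TriangleSupport.

Variable d : nat.
Hypothesis d_gt0 : 0 < d.
Variable f : nat -> nat -> sign.
Hypothesis f_supp : forall i j, (f i j != S0) = (i + j < d).

Local Notation f1 := (shift1 f).
Local Notation f2 := (shift2 f).
Local Notation tri m := (box_sum d.+1 (fun i j => i + j < m)).
Let corner i j := (i == 0) * (j == 0) + (i == d) * (j == 0) + (i == 0) * (j == d).

Lemma nz_supp i j : nz (f i j) = (i + j < d).
Proof. by rewrite /nz f_supp. Qed.

Lemma supp_eq0 i j : d <= i + j -> f i j = S0.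
Proof. by move=> dij; apply/eqP; rewrite -[_ == _]negbK f_supp -leqNgt. Qed.

Lemma shift1_eq0 i j : d < i + j -> f1 i j = S0.
Proof. by case: i => //= i ij_gt; apply: supp_eq0. Qed.

Lemma shift2_eq0 i j : d < i + j -> f2 i j = S0.
Proof. by case: j => //= j ij_gt; apply: supp_eq0; rewrite -ltnS -addnS. Qed.

Lemma corner_nz3 i j : corner i j <= (nz3 (f i j) (f1 i j) (f2 i j) == 1).
Proof.
by rewrite /corner /nz3; case: i => [|i]; case: j => [|j] /=;
  rewrite ?nz_supp ?nz0; lia.
Qed.

Lemma nz3_corner_le i j :
  nz3 (f i j) (f1 i j) (f2 i j) + 2 * corner i j
    <= (i + j < d.+1) + jump3 (f i j) (f1 i j) (f2 i j) + 2 * node3 (f i j) (f1 i j) (f2 i j).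
Proof.
have [_ | ij_gt] := ltnP (i + j) d.+1.
  apply: leq_trans (nz3_le _ _ _).
  by rewrite leq_add2l leq_mul2l corner_nz3 orbT.
by rewrite /nz3 supp_eq0 ?shift1_eq0 ?shift2_eq0 ?nz0 /corner //; lia.
Qed.

Lemma box_sum_nz : box_sum d.+1 (fun i j => nz (f i j)) = tri d.
Proof. by apply: eq_bigr => i _; apply: eq_bigr => j _; rewrite nz_supp. Qed.

Lemma box_sum_nz_shift1 : box_sum d.+1 (fun i j => nz (f1 i j)) = tri d.
Proof.
by rewrite box_sum_shift1 ?box_sum_nz // => j; rewrite /= ?supp_eq0 ?nz0 ?leq_addr.
Qed.

Lemma box_sum_nz_shift2 : box_sum d.+1 (fun i j => nz (f2 i j)) = tri d.
Proof.
by rewrite box_sum_shift2 ?box_sum_nz // => i; rewrite /= ?supp_eq0 ?nz0 ?leq_addl.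
Qed.

Lemma box_sum_corner : box_sum d.+1 (fun i j => corner i j) = 3.
Proof. by rewrite !box_sumD !box_sum_delta ltnSn. Qed.

Lemma jump3_triangle i j :
  jump (f i.+1 j) (f i j) + jump (f i j.+1) (f i j) + jump (f i j.+1) (f i.+1 j)
    <= 2 * (i + j < d.-1).
Proof.
have [_ | ij_ge] := ltnP (i + j) d.-1.
  by rewrite jumpC (jumpC (f i j.+1)) (jumpC (f i j.+1)) jump3_le2.
by rewrite (@supp_eq0 i.+1 j) ?(@supp_eq0 i j.+1) ?jump0s //; lia.
Qed.

Lemma box_sum_jump3 :
  box_sum d.+1 (fun i j => jump3 (f i j) (f1 i j) (f2 i j)) <= 2 * tri d.-1.
Proof.
have shift_f1 : box_sum d.+1 (fun i j => jump (f i j) (f1 i j))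
    = box_sum d.+1 (fun i j => jump (f i.+1 j) (f i j)).
  by rewrite box_sum_shift1 //= => j; rewrite ?jumps0 // (@supp_eq0 d j) ?jumps0 ?leq_addr.
have shift_f2 : box_sum d.+1 (fun i j => jump (f i j) (f2 i j))
    = box_sum d.+1 (fun i j => jump (f i j.+1) (f i j)).
  by rewrite box_sum_shift2 //= => i; rewrite ?jumps0 // (@supp_eq0 i d) ?jumps0 ?leq_addl.
have shift_f12 : box_sum d.+1 (fun i j => jump (f1 i j) (f2 i j))
    = box_sum d.+1 (fun i j => jump (f i j.+1) (f i.+1 j)).
  rewrite box_sum_shift1 => [|j|j] /=; rewrite ?jump0s //.
    by rewrite box_sum_shift2 //= => i; rewrite ?jumps0 // (@supp_eq0 i.+1 d) ?jumps0 ?leq_addl.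
  by rewrite (@supp_eq0 d j) ?jump0s ?leq_addr.
rewrite /jump3 !box_sumD shift_f1 shift_f2 shift_f12 -!box_sumD -box_sumMn.
exact: leq_box_sum jump3_triangle.
Qed.

Lemma box_sum_node3_ge : d + 5 <= 2 * box_sum d.+1 (fun i j => node3 (f i j) (f1 i j) (f2 i j)).
Proof.
have := leq_box_sum d.+1 _ _ nz3_corner_le.
rewrite box_sumD box_sumMn box_sum_corner /nz3 2!box_sumD.
rewrite box_sum_nz box_sum_nz_shift1 box_sum_nz_shift2 box_sumD box_sumMn box_sumD.
have := box_sum_jump3.
have tri_dS := box_sum_ltS d d (leqnn d).
have tri_d := box_sum_ltS d d.-1 (leq_pred d); rewrite prednK // in tri_d.
lia.
Qed.

End TriangleSupport.

Theorem mainTheorem7 (d : nat) (D : pt -> sign) :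
  (1 <= d)%N ->
  (forall x : pt, support2 D x <-> triangle d x) ->
  forall s : seq pt, enumerates_nodes D s ->
  (d + 5 <= 2 * size s)%N.
Proof.
move=> d_gt0 supp s s_nodes.
pose f i j := D (Posz i, Posz j).
have D_out x : ~ triangle d x -> D x = S0.
  move=> x_out; have [//|D_x] := eqVneq (D x) S0.
  by case: x_out; apply/supp; move/eqP: D_x.
have f_supp i j : (f i j != S0) = (i + j < d).
  rewrite -ltz_nat PoszD; apply/idP/idP => [/eqP /supp [_ []] //| ij_lt].
  by apply/eqP/supp.
have D_shift1 i j : D (Posz i - 1, Posz j)%R = shift1 f i j.
  by case: i => [|i]; [apply: D_out => -[] | rewrite /= -predn_int].
have D_shift2 i j : D (Posz i, Posz j - 1)%R = shift2 f i j.
  by case: j => [|j]; [apply: D_out => -[_ []] | rewrite /= -predn_int].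
apply: leq_trans (box_sum_node3_ge _ d_gt0 _ f_supp) _.
rewrite leq_pmul2l //; apply: leq_trans (box_sum_nodes d.+1 s_nodes).
by apply: leq_box_sum => i j; rewrite is_nodeE /= D_shift1 D_shift2.
Qed.
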